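(* Fix $d\geq3$ and let $T$ be a subset of $\mathbb{N}_0^d$ whose affine span has dimension $2$. Then the $2$-completion $E_2^\infty(T)$ of $T$ equals $\Lambda(T)\cap\mathbb{N}_0^d$.
   Context: $\mathbb{N}_0=\{0,1,2,\dots\}$. For nonempty $\Gamma\subseteq\mathbb{N}_0^d$, $\Lambda(\Gamma)$ is the coset in $\mathbb{Z}^d$ generated by $\Gamma$ (smallest coset of a subgroup of $\mathbb{Z}^d$ containing $\Gamma$); each $\lambda\in\Lambda(\Gamma)$ can be written $\lambda=\gamma+\sum_{\alpha\in\Gamma,\alpha\neq\gamma}m_{\gamma,\alpha}(\alpha-\gamma)$ with $\gamma\in\Gamma$ and integers $m_{\gamma,\alpha}$, finitely many nonzero. $d(\Gamma,\lambda)$ is the infimum over all such representations of $\max\big(\sum_{m_{\gamma,\alpha}>0}m_{\gamma,\alpha},-\sum_{m_{\gamma,\alpha}<0}m_{\gamma,\alpha}\big)$, and $E_n(\Gamma)=\{\lambda\in\Lambda(\Gamma)\cap\mathbb{N}_0^d:d(\Gamma,\lambda)\leq n\}$. Set $E_n^1(T)=E_n(T)$, $E_n^{k+1}(T)=E_n(E_n^k(T))$, and the $n$-completion $E_n^\infty(T)=\bigcup_{k\geq1}E_n^k(T)$. *)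

From HB Require Import structures.
From mathcomp Require Import all_boot all_order all_algebra.
Set Implicit Arguments. Unset Strict Implicit. Unset Printing Implicit Defensive.
Import Order.TTheory GRing.Theory Num.Theory.
Local Open Scope ring_scope.

Definition vec (d : nat) := 'rV[int]_d.

Definition nonneg d (l : vec d) : Prop := forall i, 0 <= l 0 i.

(* l = g + sum_{a in s} m_a (a - g), with g in G, s a duplicate-free list of
   elements of G different from g (the finitely many alpha with possibly
   nonzero coefficient). *)
Definition rep d (G : vec d -> Prop) (l g : vec d) (s : seq (vec d))
    (m : vec d -> int) : Prop :=
  [/\ G g, uniq s, (forall a, a \in s -> G a /\ a != g)
    & l = g + \sum_(a <- s) m a *: (a - g)].

Definition Lambda d (G : vec d -> Prop) (l : vec d) : Prop :=
  exists g s m, rep G l g s m.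

Definition cost d (s : seq (vec d)) (m : vec d -> int) : int :=
  Num.max (\sum_(a <- s) Num.max (m a) 0) (\sum_(a <- s) Num.max (- m a) 0).

(* d(G, l) <= n  (the infimum over a set of naturals is <= n iff it is
   attained by some representation of cost <= n) *)
Definition dist_le d (G : vec d -> Prop) (l : vec d) (n : nat) : Prop :=
  exists g s m, rep G l g s m /\ cost s m <= n%:Z.

Definition E d (n : nat) (G : vec d -> Prop) : vec d -> Prop :=
  fun l => [/\ Lambda G l, nonneg l & dist_le G l n].

Definition Einf d (n : nat) (T : vec d -> Prop) : vec d -> Prop :=
  fun l => exists k, (0 < k)%N /\ iter k (E n) T l.

Definition ratv d (v : vec d) : 'rV[rat]_d := map_mx (intr : int -> rat) v.

(* the affine span of T (in Q^d, equivalently R^d) has dimension 2: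
   there are c, a, b in T with a-c, b-c linearly independent and every
   x - c (x in T) lies in their span. *)
Definition affdim2 d (T : vec d -> Prop) : Prop :=
  exists c a b, [/\ T c, T a, T b,
    \rank (col_mx (ratv a - ratv c) (ratv b - ratv c)) = 2%N
    & forall x, T x -> (ratv x - ratv c <= col_mx (ratv a - ratv c) (ratv b - ratv c))%MS].

(* Let S be the 2-completion of T.  It is closed under every move
   g + sum_i k_i (a_i - g) with g, a_i in S whose positive and whose negative
   coefficients each sum to at most 2, as long as the result lies in N_0^d.
   Choose two coordinates on which the plane of T projects injectively, and
   p, q, r in S spanning a triangle of minimal nonzero area D there.  Write
   D t = A p + B q + G r with A + B + G = D.  For t in S minimality, and for
   t in the lattice p + Z(q - p) + Z(r - p) divisibility by D, keep each of
   A, B, G either 0 or at least D in absolute value; this drives a descent on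
   |A| + |B| + |G| in which a move replaces a vertex (or t itself) by a new
   point of S, until t is a vertex.  Hence S lies in the lattice and every
   point of N_0^d in the lattice lies in S; as T ⊆ S ⊆ Λ(T), the lattice
   is Λ(T). *)

From mathcomp Require Import all_boot all_order all_algebra.
From mathcomp Require Import ring zify.
From Stdlib Require Import Classical.
Set Implicit Arguments. Unset Strict Implicit. Unset Printing Implicit Defensive.
Import Order.TTheory GRing.Theory Num.Theory.
Local Open Scope ring_scope.

Section Submodules.
Variables (R : pzRingType) (d : nat).

Definition submod (M : 'rV[R]_d -> Prop) :=
  [/\ M 0, forall v w, M v -> M w -> M (v + w) & forall (k : R) v, M v -> M (k *: v)].

Lemma submod_sum M (I : eqType) (s : seq I) (F : I -> 'rV[R]_d) :
  submod M -> {in s, forall i, M (F i)} -> M (\sum_(i <- s) F i).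
Proof.
by move=> [M0 MD _] MF; rewrite big_seq; elim/big_rec: _ => // i w /MF; exact: MD.
Qed.

End Submodules.

Lemma sum_partition_undup (V : nmodType) (U T : eqType) (l : seq U)
    (key : U -> T) (P : pred T) (F : U -> V) :
  \sum_(a <- undup [seq key z | z <- l & P (key z)]) \sum_(z <- l | key z == a) F z
    = \sum_(z <- l | P (key z)) F z.
Proof.
set s := undup _; have s_uniq : uniq s := undup_uniq _.
have s_mem a : (a \in s) = has (fun z => (key z == a) && P (key z)) l.
  rewrite mem_undup; apply/mapP/hasP => [[z]|[z zl /andP [/eqP <- Pz]]].
    by rewrite mem_filter => /andP [Pz zl] ->; exists z; rewrite ?eqxx.
  by exists z; rewrite // mem_filter Pz.
rewrite big_seq_cond (exchange_big_dep (fun z => P (key z))) /=; last first.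
  by move=> a z /andP [+ _] /eqP ->; rewrite s_mem => /hasP [z' _ /andP [/eqP ->]].
rewrite [LHS]big_seq_cond [RHS]big_seq_cond; apply: eq_bigr => z /andP [zl Pz].
have zs : key z \in s by rewrite s_mem; apply/hasP; exists z; rewrite ?eqxx.
rewrite (eq_bigl (pred1 (key z))) => [|a /=]; last first.
  by rewrite andbT; case: (eqVneq (key z) a) => [<-|_]; rewrite ?zs ?andbF.
by rewrite big_const_seq count_uniq_mem // zs /= addr0.
Qed.

Section AffineCombinations.
Variable d : nat.
Implicit Types (G X : vec d -> Prop) (g x : vec d) (l : seq (vec d * int)).

Definition affine_comb g l : vec d := g + \sum_(z <- l) z.2 *: (z.1 - g).

Definition comb_cost l : int :=
  Num.max (\sum_(z <- l) Num.max z.2 0) (\sum_(z <- l) Num.max (- z.2) 0).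

Definition affine_closed X :=
  forall g l, X g -> {in l, forall z, X z.1} -> X (affine_comb g l).

Lemma max_sum_le0 (I : Type) (s : seq I) (P : pred I) (F : I -> int) :
  Num.max (\sum_(i <- s | P i) F i) 0 <= \sum_(i <- s | P i) Num.max (F i) 0.
Proof. by elim/big_rec2: _ => // i x y _; lia. Qed.

Lemma affine_comb_rep G g l : G g -> {in l, forall z, G z.1} ->
  exists s m, rep G (affine_comb g l) g s m /\ cost s m <= comb_cost l.
Proof.
move=> Gg Gl; pose s := undup [seq z.1 | z <- l & z.1 != g].
pose m a := \sum_(z <- l | z.1 == a) z.2.
have group (V : nmodType) (F : vec d * int -> V) :
    \sum_(a <- s) \sum_(z <- l | z.1 == a) F z = \sum_(z <- l | z.1 != g) F z.
  exact: (sum_partition_undup _ fst (fun a => a != g)).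
have cost_le (f : int -> int) : (forall a, f (m a) = \sum_(z <- l | z.1 == a) f z.2) ->
    \sum_(a <- s) Num.max (f (m a)) 0 <= \sum_(z <- l) Num.max (f z.2) 0.
  move=> f_sum; apply: (@le_trans _ _ (\sum_(z <- l | z.1 != g) Num.max (f z.2) 0)).
    by rewrite -group; apply: ler_sum => a _; rewrite f_sum; exact: max_sum_le0.
  rewrite [leRHS](bigID (fun z => z.1 != g)) lerDl /=.
  by apply: sumr_ge0 => z _; rewrite le_max lexx orbT.
exists s, m; split.
  split=> // [|a|]; first exact: undup_uniq.
    rewrite mem_undup => /mapP [z]; rewrite mem_filter => /andP [zg zl] ->.
    by split=> //; exact: Gl.
  rewrite /affine_comb; congr (_ + _).
  rewrite [LHS](bigID (fun z => z.1 != g)) /= [X in _ + X = _]big1 ?addr0; last first.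
    by move=> z /negbNE /eqP ->; rewrite subrr scaler0.
  rewrite -group; apply: eq_bigr => a _; rewrite scaler_suml.
  by apply: eq_bigr => z /eqP ->.
have pos : \sum_(a <- s) Num.max (m a) 0 <= \sum_(z <- l) Num.max z.2 0.
  exact: (cost_le id).
have neg : \sum_(a <- s) Num.max (- m a) 0 <= \sum_(z <- l) Num.max (- z.2) 0.
  by apply: (cost_le -%R) => a; rewrite /m sumrN.
by rewrite /cost /comb_cost ge_max !le_max pos neg orbT.
Qed.

Lemma Lambda_sub G x : G x -> Lambda G x.
Proof. by move=> Gx; exists x, [::], (fun=> 0); split; rewrite ?big_nil ?addr0. Qed.

Lemma E_sub n G x : G x -> nonneg x -> E n G x.
Proof.
move=> Gx nx; split=> //; first exact: Lambda_sub.
exists x, [::], (fun=> 0); split; first by split; rewrite ?big_nil ?addr0.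
by rewrite /cost !big_nil.
Qed.

Lemma rep_mono G X x g s m : (forall y, G y -> X y) -> rep G x g s m -> rep X x g s m.
Proof. by move=> GX [Gg us Gs ->]; split=> // [|a /Gs [/GX]]; [exact: GX|]. Qed.

Lemma E_mono n G X x : (forall y, G y -> X y) -> E n G x -> E n X x.
Proof.
move=> GX [[g [s [m R]]] nx [g' [s' [m' [R' c']]]]]; split=> //.
  by exists g, s, m; exact: rep_mono R.
by exists g', s', m'; split=> //; exact: rep_mono R'.
Qed.

Lemma rep_affine_comb G x g s m : rep G x g s m ->
  [/\ G g, {in [seq (a, m a) | a <- s], forall z, G z.1}
    & x = affine_comb g [seq (a, m a) | a <- s]].
Proof.
case=> Gg _ Gs ->; split=> //; last by rewrite /affine_comb big_map.
by move=> _ /mapP [a /Gs [Ga _] ->].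
Qed.

Lemma Lambda_min G X : affine_closed X -> (forall x, G x -> X x) ->
  forall x, Lambda G x -> X x.
Proof.
move=> Xaff GX x [g [s [m /rep_affine_comb [Gg Gs ->]]]].
by apply: Xaff => [|z /Gs]; exact: GX.
Qed.

Lemma affine_closed_shift M c : submod M -> affine_closed (fun x => M (x - c)).
Proof.
move=> Msub g l Mg Ml; have [_ MD MZ] := Msub.
have -> : affine_comb g l - c = (g - c) + \sum_(z <- l) z.2 *: ((z.1 - c) - (g - c)).
  rewrite /affine_comb addrAC; congr (_ + _).
  by apply: eq_bigr => z _; rewrite opprB addrA subrK.
apply: (MD _ _ Mg (submod_sum Msub _)) => z zl.
by apply: (MZ _ _ (MD _ _ (Ml z zl) _)); rewrite -scaleN1r; exact: MZ.
Qed.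

Definition span G c w :=
  exists l, {in l, forall z, G z.1} /\ w = \sum_(z <- l) z.2 *: (z.1 - c).

Lemma span_submod G c : submod (span G c).
Proof.
split.
- by exists [::]; rewrite big_nil.
- move=> _ _ [l1 [G1 ->]] [l2 [G2 ->]]; exists (l1 ++ l2); rewrite big_cat.
  by split=> // z; rewrite mem_cat => /orP [/G1|/G2].
- move=> k _ [l [Gl ->]]; exists [seq (z.1, k * z.2) | z <- l]; split.
    by move=> _ /mapP [z /Gl Gz ->].
  by rewrite big_map scaler_sumr; apply: eq_bigr => z _; rewrite scalerA.
Qed.

Lemma Lambda_span G c x : G c -> Lambda G x <-> span G c (x - c).
Proof.
move=> Gc; split.
  apply: (Lambda_min (affine_closed_shift (c := c) (span_submod G c))) => {}x Gx.
  by exists [:: (x, 1)]; split=> [z /[!inE] /eqP -> //|]; rewrite big_seq1 scale1r.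
move=> [l [Gl Ex]]; have [s [m [R _]]] := affine_comb_rep Gc Gl.
by exists c, s, m; rewrite /affine_comb -Ex addrC subrK in R.
Qed.

Lemma Lambda_affine_closed G c : G c -> affine_closed (Lambda G).
Proof.
move=> Gc g l /(Lambda_span _ Gc) Lg Ll; apply/(Lambda_span _ Gc).
by apply: (affine_closed_shift (c := c) (span_submod G c)) => // z /Ll /(Lambda_span _ Gc).
Qed.

End AffineCombinations.

Section Closure.
Variables (d n : nat) (T : vec d -> Prop).
Hypothesis T_nonneg : forall x, T x -> nonneg x.

Definition closure x := exists k, iter k (E n) T x.

Lemma iter_E_nonneg k x : iter k (E n) T x -> nonneg x.
Proof. by case: k => [/T_nonneg|k []]. Qed.

Lemma iter_E_succ k x : iter k (E n) T x -> iter k.+1 (E n) T x.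
Proof.
elim: k x => [|k IH] x Hx; first by apply: E_sub => //; exact: T_nonneg.
by apply: E_mono Hx; exact: IH.
Qed.

Lemma iter_E_mono k k' x : (k <= k')%N -> iter k (E n) T x -> iter k' (E n) T x.
Proof.
by move=> /subnK <-; elim: (k' - k)%N => // j IH Hx; rewrite addSn; exact/iter_E_succ/IH.
Qed.

Lemma closure_T x : T x -> closure x.
Proof. by exists 0%N. Qed.

Lemma closure_nonneg x : closure x -> nonneg x.
Proof. by case=> k; exact: iter_E_nonneg. Qed.

Lemma closure_iter (s : seq (vec d)) : {in s, forall x, closure x} ->
  exists k, {in s, forall x, iter k (E n) T x}.
Proof.
elim: s => [|x s IH] Ss; first by exists 0%N.
have [|k Hk] := IH; first by move=> y ys; apply: Ss; rewrite inE ys orbT.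
have [k' Hk'] := Ss x (mem_head _ _).
exists (maxn k k') => y /predU1P [->|ys]; first exact: iter_E_mono (leq_maxr _ _) Hk'.
exact: iter_E_mono (leq_maxl _ _) (Hk y ys).
Qed.

Lemma closure_move g l : closure g -> {in l, forall z, closure z.1} ->
  comb_cost l <= n%:Z -> nonneg (affine_comb g l) -> closure (affine_comb g l).
Proof.
move=> Sg Sl cost_l nn.
have [|k Hk] := @closure_iter (g :: [seq z.1 | z <- l]).
  by move=> x /predU1P [->|/mapP [z /Sl Sz ->]].
have Gl : {in l, forall z, iter k (E n) T z.1}.
  by move=> z zl; apply: Hk; rewrite inE map_f ?orbT.
have [s [m [R Rc]]] := affine_comb_rep (Hk g (mem_head _ _)) Gl.
exists k.+1; split=> //; first by exists g, s, m.
by exists g, s, m; split=> //; exact: le_trans Rc cost_l.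
Qed.

Lemma Einf_closure x : Einf n T x <-> closure x.
Proof.
split=> [[k [_ Hk]]|[k Hk]]; first by exists k.
by exists k.+1; split=> //; exact: iter_E_succ.
Qed.

Lemma closure_Lambda c x : T c -> closure x -> Lambda T x.
Proof.
move=> Tc [k]; elim: k x => [|k IH] x; first exact: Lambda_sub.
by case=> Lx _ _; apply: Lambda_min Lx => //; exact: Lambda_affine_closed Tc.
Qed.

End Closure.

Section Plane.
Variables (R : idomainType) (d : nat) (i0 j0 : 'I_d).
Implicit Types (u v w c p q r t : 'rV[R]_d).

Definition minor u v : R := u 0 i0 * v 0 j0 - u 0 j0 * v 0 i0.

(* When [minor u v != 0], this says that [w] lies in the span of [u] and [v]
   (Cramer's rule in the coordinates [i0], [j0]). *)
Definition in_plane u v w := minor u v *: w = minor w v *: u + minor u w *: v.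

(* Twice the signed area of the triangle [p q r] projected on [i0], [j0]. *)
Definition tri_det p q r := minor (q - p) (r - p).

Lemma in_plane_comb u v (a b : R) : in_plane u v (a *: u + b *: v).
Proof. by apply/rowP => e; rewrite /minor !mxE; ring. Qed.

Lemma in_plane_submod u v : submod (in_plane u v).
Proof.
split=> [|w w' h h'|k w h]; apply/rowP => e.
- by rewrite /minor !mxE; ring.
- move/rowP/(_ e): h; move/rowP/(_ e): h'; rewrite /minor !mxE => h' h.
  by rewrite mulrDr h h'; ring.
- by move/rowP/(_ e): h; rewrite /minor !mxE => h; rewrite mulrCA h; ring.
Qed.

Lemma tri_det_perm12 p q r : tri_det q p r = - tri_det p q r.
Proof. by rewrite /tri_det /minor !mxE; ring. Qed.

Lemma tri_det_perm23 p q r : tri_det p r q = - tri_det p q r.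
Proof. by rewrite /tri_det /minor !mxE; ring. Qed.

Lemma tri_det_sum p q r t :
  tri_det t q r + tri_det p t r + tri_det p q t = tri_det p q r.
Proof. by rewrite /tri_det /minor !mxE; ring. Qed.

Lemma tri_det_comb (D A B G : R) p q r t :
  D *: t = A *: p + B *: q + G *: r -> A + B + G = D ->
  D * tri_det t q r = A * tri_det p q r.
Proof.
move=> /rowP comb sum; move: (comb i0) (comb j0); rewrite !mxE => ti tj.
transitivity (D * (q 0 i0 * r 0 j0 - q 0 j0 * r 0 i0)
    + D * t 0 i0 * (q 0 j0 - r 0 j0) + D * t 0 j0 * (r 0 i0 - q 0 i0)).
  by rewrite /tri_det /minor !mxE; ring.
by rewrite ti tj -sum /tri_det /minor !mxE; ring.
Qed.

Lemma in_plane_coord0 u v w : minor u v != 0 -> in_plane u v w ->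
  w 0 i0 = 0 -> w 0 j0 = 0 -> w = 0.
Proof.
move=> uv_neq0 w_uv wi wj; have : minor u v *: w == 0.
  by rewrite w_uv /minor wi wj !(mul0r, mulr0, subrr, scale0r, addr0).
by rewrite scalemx_eq0 (negbTE uv_neq0) => /eqP.
Qed.

Lemma tri_det_cramer u v c p q r t : minor u v != 0 ->
  in_plane u v (p - c) -> in_plane u v (q - c) -> in_plane u v (r - c) ->
  in_plane u v (t - c) ->
  tri_det p q r *: t = tri_det t q r *: p + tri_det p t r *: q + tri_det p q t *: r.
Proof.
(* The difference of the two sides lies in the plane and vanishes at [i0], [j0]. *)
move=> uv_neq0 Pp Pq Pr Pt; apply/eqP; rewrite -subr_eq0; apply/eqP.
have [_ PD PZ] := in_plane_submod u v.
apply: (in_plane_coord0 uv_neq0); last 2 first.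
- by rewrite /tri_det /minor !mxE; ring.
- by rewrite /tri_det /minor !mxE; ring.
have -> : tri_det p q r *: t
      - (tri_det t q r *: p + tri_det p t r *: q + tri_det p q t *: r)
    = tri_det p q r *: (t - c) + (- tri_det t q r) *: (p - c)
      + (- tri_det p t r) *: (q - c) + (- tri_det p q t) *: (r - c).
  by apply/rowP => e; rewrite /tri_det /minor !mxE; ring.
by apply: (PD _ _ (PD _ _ (PD _ _ (PZ _ _ Pt) (PZ _ _ Pp)) (PZ _ _ Pq)) (PZ _ _ Pr)).
Qed.

End Plane.

Lemma rank2_minor (F : fieldType) d (u v : 'rV[F]_d) :
  \rank (col_mx u v) = 2%N -> exists i j, minor i j u v != 0.
Proof.
move=> rk; case: (pickP (fun ij : 'I_d * 'I_d => minor ij.1 ij.2 u v != 0)).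
  by move=> [i j] h; exists i, j.
move=> /= minor0; suff : (\rank (col_mx u v) <= 1)%N by rewrite rk.
case: (pickP (fun i => u 0 i != 0)) => [i /= ui|/= u0].
  have -> : v = (v 0 i / u 0 i) *: u.
    apply/rowP => k; have /negbFE := minor0 (i, k); rewrite /minor subr_eq0 => /eqP h.
    by rewrite mxE; apply: (mulfI ui); rewrite h /=; field.
  apply: leq_trans (rank_leq_row u); apply: mxrankS.
  by rewrite col_mx_sub submx_refl scalemx_sub.
have -> : u = 0 by apply/rowP => i; rewrite mxE; apply/eqP; rewrite -[_ == _]negbK u0.
apply: leq_trans (rank_leq_row v); apply: mxrankS.
by rewrite col_mx_sub sub0mx submx_refl.
Qed.

Lemma submx_in_plane (F : fieldType) d (i0 j0 : 'I_d) (u v w : 'rV[F]_d) :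
  (w <= col_mx u v)%MS -> in_plane i0 j0 u v w.
Proof.
rewrite -addsmxE => /sub_addsmxP [[a b] /= ->].
by rewrite (mx11_scalar a) (mx11_scalar b) !mul_scalar_mx; exact: in_plane_comb.
Qed.

Section RationalPlane.
Variables (d : nat) (i0 j0 : 'I_d).

Lemma minor_ratv (u v : vec d) :
  minor i0 j0 (ratv u) (ratv v) = (minor i0 j0 u v)%:~R.
Proof. by rewrite /minor !mxE intrB !intrM. Qed.

Lemma in_plane_ratv (u v w : vec d) :
  in_plane i0 j0 (ratv u) (ratv v) (ratv w) -> in_plane i0 j0 u v w.
Proof.
move=> /rowP h; apply/rowP => e; apply: (@intr_inj rat); move: (h e).
by rewrite !minor_ratv !mxE !(intrD, intrM).
Qed.

Lemma ratvB (x y : vec d) : ratv (x - y) = ratv x - ratv y.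
Proof. by apply/rowP => e; rewrite !mxE intrB. Qed.

End RationalPlane.

Lemma affdim2_plane d (T : vec d -> Prop) : affdim2 T ->
  exists c a b i0 j0, [/\ T c, T a, T b, tri_det i0 j0 c a b != 0
    & forall x, Lambda T x -> in_plane i0 j0 (a - c) (b - c) (x - c)].
Proof.
move=> [c [a [b [Tc Ta Tb rank2 T_span]]]].
have [i0 [j0]] := rank2_minor rank2; rewrite -!ratvB minor_ratv intr_eq0 => uv_neq0.
exists c, a, b, i0, j0; split=> //.
apply: (Lambda_min (affine_closed_shift (c := c) (in_plane_submod i0 j0 (a - c) (b - c)))).
by move=> x /T_span; rewrite -!ratvB => /(submx_in_plane i0 j0); exact: in_plane_ratv.
Qed.

Section Lattice.
Variable d : nat.
Implicit Types (p q r t x y z : vec d).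

Definition lattice p q r t :=
  exists b c : int, t - p = b *: (q - p) + c *: (r - p).

Lemma lattice_affine_closed p q r : affine_closed (lattice p q r).
Proof.
apply: (affine_closed_shift (c := p)
  (M := fun w => exists b c : int, w = b *: (q - p) + c *: (r - p))); split.
- by exists 0, 0; rewrite !scale0r addr0.
- move=> _ _ [b [c ->]] [b' [c' ->]]; exists (b + b'), (c + c').
  by rewrite !scalerDl addrACA.
- by move=> k _ [b [c ->]]; exists (k * b), (k * c); rewrite scalerDr !scalerA.
Qed.

Lemma lattice_vertices p q r :
  [/\ lattice p q r p, lattice p q r q & lattice p q r r].
Proof.
split; [exists 0, 0 | exists 1, 0 | exists 0, 1];
  by rewrite ?subrr ?scale0r ?scale1r ?addr0 ?add0r.
Qed.

Lemma lattice_sub p q r x y z t : lattice p q r x -> lattice p q r y ->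
  lattice p q r z -> lattice x y z t -> lattice p q r t.
Proof.
move=> Lx Ly Lz [b [c Et]].
have -> : t = affine_comb x [:: (y, b); (z, c)].
  by rewrite /affine_comb !big_cons big_nil addr0 -Et addrC subrK.
by apply: lattice_affine_closed => // w /[!inE] /orP [] /eqP ->.
Qed.

Lemma lattice_perm12 p q r t : lattice q p r t -> lattice p q r t.
Proof. by have [Lp Lq Lr] := lattice_vertices p q r; exact: lattice_sub. Qed.

Lemma lattice_perm23 p q r t : lattice p r q t -> lattice p q r t.
Proof. by have [Lp Lq Lr] := lattice_vertices p q r; exact: lattice_sub. Qed.

Lemma lattice_perm13 p q r t : lattice r q p t -> lattice p q r t.
Proof. by have [Lp Lq Lr] := lattice_vertices p q r; exact: lattice_sub. Qed.

End Lattice.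

Lemma nonneg_comb3 d (k a b c : int) (x y z w : vec d) : 0 < k ->
  0 <= a -> 0 <= b -> 0 <= c -> nonneg x -> nonneg y -> nonneg z ->
  k *: w = a *: x + b *: y + c *: z -> nonneg w.
Proof.
move=> k_gt0 a_ge0 b_ge0 c_ge0 nx ny nz /rowP Ew i; move: (Ew i); rewrite !mxE => Ei.
by rewrite -(pmulr_rge0 _ k_gt0) Ei !addr_ge0 ?mulr_ge0.
Qed.

Lemma dvdz_gap (D x : int) : (D %| x)%Z -> x = 0 \/ `|D| <= `|x|.
Proof.
rewrite dvdzE; case: (eqVneq x 0) => [|x_neq0 /dvdn_leq]; first by left.
by rewrite absz_gt0 x_neq0 => /(_ isT) le; right; rewrite -!abszE lez_nat.
Qed.

Section Descent.
Variables (d : nat) (S : vec d -> Prop) (i0 j0 : 'I_d) (D : int).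
Hypothesis S_nonneg : forall x, S x -> nonneg x.
Hypothesis S_move : forall g l, S g -> {in l, forall z, S z.1} ->
  comb_cost l <= 2 -> nonneg (affine_comb g l) -> S (affine_comb g l).
Hypothesis D_gt0 : 0 < D.
Hypothesis det_min : forall p q r, S p -> S q -> S r ->
  tri_det i0 j0 p q r != 0 -> D <= `|tri_det i0 j0 p q r|.
Local Notation det := (tri_det i0 j0).

Let D_neq0 : D != 0. Proof. by rewrite gt_eqF. Qed.

(* The two alternatives of [config_target] are the two uses of the descent:
   to put a point of S into the lattice of [p q r], and to put a point of the
   lattice (whose coordinates are then multiples of [D]) into S. *)
Record config t p q r A B G : Prop := Config {
  config_Sp : S p;
  config_Sq : S q;
  config_Sr : S r;
  config_det : `|det p q r| = D;
  config_sum : A + B + G = D;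
  config_comb : D *: t = A *: p + B *: q + G *: r;
  config_nonneg : nonneg t;
  config_target : S t \/ [/\ (D %| A)%Z, (D %| B)%Z & (D %| G)%Z] }.

Lemma config_perm12 t p q r A B G :
  config t p q r A B G -> config t q p r B A G.
Proof.
case=> Sp Sq Sr dt sum comb nt tgt; split=> //.
- by rewrite tri_det_perm12 normrN.
- by rewrite -sum (addrC B).
- by rewrite comb (addrC (A *: p)).
- by case: tgt => [|[]]; [left | right].
Qed.

Lemma config_perm23 t p q r A B G :
  config t p q r A B G -> config t p r q A G B.
Proof.
case=> Sp Sq Sr dt sum comb nt tgt; split=> //.
- by rewrite tri_det_perm23 normrN.
- by rewrite -sum addrAC.
- by rewrite comb addrAC.
- by case: tgt => [|[]]; [left | right].
Qed.

Lemma config_perm13 t p q r A B G :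
  config t p q r A B G -> config t r q p G B A.
Proof. by move=> /config_perm12/config_perm23/config_perm12. Qed.

Lemma config_gap t p q r A B G : config t p q r A B G -> A = 0 \/ D <= `|A|.
Proof.
case=> Sp Sq Sr dt sum comb _ [St|[dA _ _]]; last first.
  by rewrite -[X in X <= _]gtr0_norm //; exact: dvdz_gap.
have := congr1 Num.norm (tri_det_comb i0 j0 comb sum).
rewrite !normrM dt gtr0_norm // [RHS]mulrC => /(mulfI D_neq0) Edet.
case: (eqVneq A 0) => [|A_neq0]; [by left | right].
by rewrite -Edet det_min // -normr_eq0 Edet normr_eq0.
Qed.

Definition descent_bound n := forall t p q r A B G, config t p q r A B G ->
  `|A| + `|B| + `|G| <= n%:Z -> S t /\ lattice p q r t.

Lemma descent_vertex t p q r : config t p q r D 0 0 -> S t /\ lattice p q r t.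
Proof.
case=> Sp _ _ _ _ /rowP comb _ _; have -> : t = p.
  by apply/rowP => e; apply: (mulfI D_neq0); move: (comb e); rewrite !mxE !mul0r !addr0.
by split=> //; have [] := lattice_vertices p q r.
Qed.

Lemma descent_one_neg n t p q r A B G : descent_bound n ->
  config t p q r A B G -> `|A| + `|B| + `|G| <= n.+1%:Z ->
  A < 0 -> 0 <= B -> 0 <= G -> S t /\ lattice p q r t.
Proof.
move=> IH cfg size_le A_lt0 B_ge0 G_ge0; have [Sp Sq Sr dt sum comb nt tgt] := cfg.
have gA := config_gap cfg; have gB := config_gap (config_perm12 cfg).
have gG := config_gap (config_perm13 cfg).
have [b [b_ge0 b_le2 Bb Gb]] :
    exists b : int, [/\ 0 <= b, b <= 2, B <= - A * b & G <= - A * (2 - b)].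
  by case: (lerP B (- A)) => ?; case: (lerP G (- A)) => ?;
    [exists 1 | exists 0 | exists 2 | exfalso]; try split; lia.
pose y := affine_comb p [:: (q, b); (r, 2 - b)].
have Ey : y = - p + b *: q + (2 - b) *: r.
  by apply/rowP => e; rewrite /y /affine_comb !big_cons big_nil /= !mxE; ring.
have Sy : S y.
  apply: S_move => //; first by move=> z /[!inE] /orP [] /eqP ->.
    by rewrite /comb_cost !big_cons !big_nil /=; lia.
  apply: (nonneg_comb3 (k := - A) (a := D) (b := - A * b - B) (c := - A * (2 - b) - G)
    _ _ _ _ nt (S_nonneg Sq) (S_nonneg Sr)); try lia.
  by rewrite -/y Ey comb; apply/rowP => e; rewrite !mxE; ring.
have [St Lt] : S t /\ lattice y q r t.
  apply: (IH _ _ _ _ (- A) (A * b + B) (A * (2 - b) + G)); last by lia.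
  split=> //.
  - by rewrite -dt Ey /tri_det /minor !mxE -normrN; congr `|_|; ring.
  - by rewrite -sum; ring.
  - by rewrite comb Ey; apply/rowP => e; rewrite !mxE; ring.
  - case: tgt => [St|[dA dB dG]]; [by left | right].
    by split; [rewrite rpredN | apply: rpredD; rewrite ?dvdz_mulr..].
split=> //; have [Lp Lq Lr] := lattice_vertices p q r; apply: lattice_sub Lt => //.
by exists b, (2 - b); rewrite Ey; apply/rowP => e; rewrite !mxE; ring.
Qed.

Lemma descent_reflect n t p q r A B G : descent_bound n ->
  config t p q r A B G -> `|A| + `|B| + `|G| <= n.+1%:Z ->
  0 <= A -> G < 0 -> B <= G - D -> S t /\ lattice p q r t.
Proof.
move=> IH cfg size_le A_ge0 G_lt0 BG; have [Sp Sq Sr dt sum comb nt tgt] := cfg.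
pose y := affine_comb p [:: (q, -1)].
have Ey : y = 2 *: p - q.
  by apply/rowP => e; rewrite /y /affine_comb big_seq1 /= !mxE; ring.
have Sy : S y.
  apply: S_move => //; first by move=> z /[!inE] /eqP ->.
    by rewrite /comb_cost !big_seq1 /=; lia.
  apply: (nonneg_comb3 (k := - B) (a := D) (b := G - B - D) (c := - G)
    _ _ _ _ nt (S_nonneg Sp) (S_nonneg Sr)); try lia.
  have eA : A = D - B - G by lia.
  by rewrite -/y Ey comb eA; apply/rowP => e; rewrite !mxE; ring.
have [St Lt] : S t /\ lattice p y r t.
  apply: (IH _ _ _ _ (A + 2 * B) (- B) G); last by lia.
  split=> //.
  - by rewrite -dt Ey /tri_det /minor !mxE -normrN; congr `|_|; ring.
  - by rewrite -sum; ring.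
  - by rewrite comb Ey; apply/rowP => e; rewrite !mxE; ring.
  - case: tgt => [St|[dA dB dG]]; [by left | right].
    by split; rewrite ?rpredN // rpredD ?dvdz_mull.
split=> //; have [Lp Lq Lr] := lattice_vertices p q r; apply: lattice_sub Lt => //.
by exists (-1), 0; rewrite Ey; apply/rowP => e; rewrite !mxE; ring.
Qed.

Lemma descent_reflect_both n t p q r A B : descent_bound n ->
  config t p q r A B B -> `|A| + `|B| + `|B| <= n.+1%:Z ->
  B <= - D -> S t /\ lattice p q r t.
Proof.
move=> IH cfg size_le B_le; have [Sp Sq Sr dt sum comb nt tgt] := cfg.
pose z := affine_comb p [:: (q, -1); (r, -1)].
have Ez : z = 3 *: p - q - r.
  by apply/rowP => e; rewrite /z /affine_comb !big_cons !big_nil /= !mxE; ring.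
have Sz : S z.
  apply: S_move => //; first by move=> w /[!inE] /orP [] /eqP ->.
    by rewrite /comb_cost !big_cons !big_nil /=; lia.
  apply: (nonneg_comb3 (k := A) (a := 3 * D) (b := - D - B) (c := - D - B)
    _ _ _ _ nt (S_nonneg Sq) (S_nonneg Sr)); try lia.
  have eA : A = D - 2 * B by lia.
  by rewrite -/z Ez -scalerA comb eA; apply/rowP => e; rewrite !mxE; ring.
have [St Lt] : S t /\ lattice p q z t.
  apply: (IH _ _ _ _ (A + 3 * B) 0 (- B)); last by lia.
  split=> //.
  - by rewrite -dt Ez /tri_det /minor !mxE -normrN; congr `|_|; ring.
  - by rewrite -sum; ring.
  - by rewrite comb Ez; apply/rowP => e; rewrite !mxE; ring.
  - case: tgt => [St|[dA dB _]]; [by left | right].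
    by split; rewrite ?rpredN ?rpred0 // rpredD ?dvdz_mull.
split=> //; have [Lp Lq Lr] := lattice_vertices p q r; apply: lattice_sub Lt => //.
by exists (-1), (-1); rewrite Ez; apply/rowP => e; rewrite !mxE; ring.
Qed.

(* Here no move among [p], [q], [r] is known to stay in N_0^d, so the target
   itself, which is in S in this case, is moved. *)
Lemma descent_move_target n t p q r A B G : descent_bound n ->
  config t p q r A B G -> `|A| + `|B| + `|G| <= n.+1%:Z -> S t ->
  B <= - D -> G <= - D -> B - G < D -> G - B < D -> S t /\ lattice p q r t.
Proof.
move=> IH cfg size_le St B_le G_le BG GB; have [Sp Sq Sr dt sum comb nt _] := cfg.
pose z := affine_comb q [:: (t, 1); (r, 1); (p, -2)].
have Ez : z = t + q + r - 2 *: p.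
  by apply/rowP => e; rewrite /z /affine_comb !big_cons !big_nil /= !mxE; ring.
have nz : nonneg z.
  apply: (nonneg_comb3 (k := A) (a := A - 2 * D) (b := A + 2 * B) (c := A + 2 * G)
    _ _ _ _ nt (S_nonneg Sq) (S_nonneg Sr)); try lia.
  by rewrite Ez scalerBl -scalerA comb; apply/rowP => e; rewrite !mxE; ring.
have Sz : S z.
  apply: S_move => //; first by move=> w /[!inE] /or3P [] /eqP ->.
  by rewrite /comb_cost !big_cons !big_nil /=; lia.
have [_ Lz] : S z /\ lattice p q r z.
  apply: (IH _ _ _ _ (A - 2 * D) (B + D) (G + D)); last by lia.
  split=> //; [by rewrite -sum; ring | | by left].
  by rewrite Ez !scalerDr comb; apply/rowP => e; rewrite !mxE; ring.
split=> //; have [Lp Lq Lr] := lattice_vertices p q r.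
have -> : t = affine_comb z [:: (q, -1); (r, -1); (p, 2)].
  by apply/rowP => e; rewrite /affine_comb !big_cons !big_nil /= Ez !mxE; ring.
by apply: lattice_affine_closed => // w /[!inE] /or3P [] /eqP ->.
Qed.

Lemma descent_two_neg n t p q r A B G : descent_bound n ->
  config t p q r A B G -> `|A| + `|B| + `|G| <= n.+1%:Z ->
  0 <= A -> B < 0 -> G < 0 -> S t /\ lattice p q r t.
Proof.
move=> IH cfg size_le A_ge0 B_lt0 G_lt0.
have gB := config_gap (config_perm12 cfg); have gG := config_gap (config_perm13 cfg).
case: (lerP B (G - D)) => [BG|GB].
  exact: descent_reflect IH cfg size_le A_ge0 G_lt0 BG.
case: (lerP G (B - D)) => [GB'|BG].
  have [|St Lt] := descent_reflect IH (config_perm23 cfg) _ A_ge0 B_lt0 GB'; first lia.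
  by split=> //; exact: lattice_perm23.
case: (eqVneq B G) => [eBG|B_neq_G].
  by rewrite -eBG in cfg size_le; apply: descent_reflect_both IH cfg size_le _; lia.
case: (config_target cfg) => [St|[_ dB dG]].
  by apply: descent_move_target IH cfg size_le St _ _ _ _; lia.
have := dvdz_gap (rpredB dB dG); rewrite gtr0_norm //; lia.
Qed.

Lemma descent n t p q r A B G : config t p q r A B G ->
  `|A| + `|B| + `|G| <= n%:Z -> S t /\ lattice p q r t.
Proof.
elim: n t p q r A B G => [|n IH] t p q r A B G cfg size_le.
  by have := config_sum cfg; lia.
have sum := config_sum cfg; have gA := config_gap cfg.
have gB := config_gap (config_perm12 cfg); have gG := config_gap (config_perm13 cfg).
have perm12 : S t /\ lattice q p r t -> S t /\ lattice p q r t.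
  by case=> St /lattice_perm12.
have perm13 : S t /\ lattice r q p t -> S t /\ lattice p q r t.
  by case=> St /lattice_perm13.
case: (ltrP A 0) => hA; case: (ltrP B 0) => hB; case: (ltrP G 0) => hG.
- lia.
- by apply/perm13/(descent_two_neg IH (config_perm13 cfg)) => //; lia.
- by apply/perm12/(descent_two_neg IH (config_perm12 cfg)) => //; lia.
- exact: descent_one_neg IH cfg size_le hA hB hG.
- exact: descent_two_neg IH cfg size_le hA hB hG.
- by apply/perm12/(descent_one_neg IH (config_perm12 cfg)) => //; lia.
- by apply/perm13/(descent_one_neg IH (config_perm13 cfg)) => //; lia.
have [[eA [eB eG]]|[[eA [eB eG]]|[eA [eB eG]]]] :
    (A = D /\ B = 0 /\ G = 0) \/ (A = 0 /\ B = D /\ G = 0) \/ (A = 0 /\ B = 0 /\ G = D).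
  by lia.
- by rewrite eA eB eG in cfg; exact: descent_vertex cfg.
- by rewrite eA eB eG in cfg; apply/perm12; exact: descent_vertex (config_perm12 cfg).
- by rewrite eA eB eG in cfg; apply/perm13; exact: descent_vertex (config_perm13 cfg).
Qed.

Lemma closure_in_lattice p q r t (A B G : int) : S p -> S q -> S r ->
  `|det p q r| = D -> S t -> A + B + G = D -> D *: t = A *: p + B *: q + G *: r ->
  lattice p q r t.
Proof.
move=> Sp Sq Sr dt St sum comb.
have cfg : config t p q r A B G by split=> //; [exact: S_nonneg | left].
by apply: (proj2 (descent (n := absz A + absz B + absz G) cfg _)); lia.
Qed.

Lemma lattice_in_closure p q r t : S p -> S q -> S r -> `|det p q r| = D ->
  nonneg t -> lattice p q r t -> S t.
Proof.
move=> Sp Sq Sr dt nt [b [c Et]].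
have cfg : config t p q r (D * (1 - b - c)) (D * b) (D * c).
  split=> //; first by ring.
    by rewrite -[t](subrK p) Et; apply/rowP => e; rewrite !mxE; ring.
  by right; split; apply: dvdz_mulr; exact: dvdzz.
apply: (proj1 (descent (n := absz (D * (1 - b - c)) + absz (D * b) + absz (D * c)) cfg _)).
lia.
Qed.

End Descent.

Lemma ex_minimal_nat (P : nat -> Prop) m : P m ->
  exists2 n, P n & forall k, P k -> (n <= k)%N.
Proof.
elim/ltn_ind: m => m IH Pm.
have [[k [Pk km]]|no_smaller] := classic (exists k, P k /\ (k < m)%N).
  exact: IH km Pk.
by exists m => // k Pk; rewrite leqNgt; apply/negP => km; apply: no_smaller; exists k.
Qed.

Lemma ex_min_triangle d (S : vec d -> Prop) (i0 j0 : 'I_d) p q r :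
  S p -> S q -> S r -> tri_det i0 j0 p q r != 0 ->
  exists p q r, [/\ S p, S q, S r, 0 < tri_det i0 j0 p q r &
    forall p' q' r', S p' -> S q' -> S r' -> tri_det i0 j0 p' q' r' != 0 ->
      tri_det i0 j0 p q r <= `|tri_det i0 j0 p' q' r'|].
Proof.
move=> Sp Sq Sr det_neq0.
pose P k := exists p q r, [/\ S p, S q, S r, tri_det i0 j0 p q r != 0
  & absz (tri_det i0 j0 p q r) = k].
have [|_ [{}p [{}q [{}r [{}Sp {}Sq {}Sr {}det_neq0 <-]]]] min] :=
  @ex_minimal_nat P (absz (tri_det i0 j0 p q r)); first by exists p, q, r.
have {}min p' q' r' : S p' -> S q' -> S r' -> tri_det i0 j0 p' q' r' != 0 ->
    `|tri_det i0 j0 p q r| <= `|tri_det i0 j0 p' q' r'|.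
  by move=> Sp' Sq' Sr' nz; rewrite -!abszE lez_nat; apply: min; exists p', q', r'.
case: (ltrP 0 (tri_det i0 j0 p q r)) => [pos|neg].
  by exists p, q, r; split=> // ???; rewrite -{1}(gtr0_norm pos); exact: min.
exists p, r, q; rewrite tri_det_perm23; split=> //.
  by rewrite oppr_gt0 lt_neqAle det_neq0.
by move=> ???; rewrite -(ler0_norm neg); exact: min.
Qed.

Theorem lemma3p5 (d : nat) (T : vec d -> Prop) :
  (3 <= d)%N ->
  (forall x, T x -> nonneg x) ->
  affdim2 T ->
  forall l : vec d, Einf 2 T l <-> (Lambda T l /\ nonneg l).
Proof.
move=> _ T_nonneg /affdim2_plane [c [a [b [i0 [j0 [Tc Ta Tb cab_neq0 plane]]]]]] l.
have S_nonneg := closure_nonneg (n := 2) T_nonneg.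
have S_move := closure_move (n := 2) T_nonneg.
have [p [q [r [Sp Sq Sr D_gt0 det_min]]]] :=
  ex_min_triangle (closure_T 2 Tc) (closure_T 2 Ta) (closure_T 2 Tb) cab_neq0.
have D_norm := gtr0_norm D_gt0.
have S_lattice t : closure 2 T t -> lattice p q r t.
  move=> St; apply: (closure_in_lattice S_nonneg S_move D_gt0 det_min Sp Sq Sr D_norm St
    (tri_det_sum i0 j0 p q r t)).
  by apply: tri_det_cramer cab_neq0 _ _ _ _; apply/plane/(closure_Lambda (n := 2) Tc).
rewrite Einf_closure //; split=> [Sl|[Ll nl]].
  by split; [exact: closure_Lambda Tc Sl | exact: (S_nonneg _ Sl)].
apply: (lattice_in_closure S_nonneg S_move D_gt0 det_min Sp Sq Sr D_norm nl).
apply: (Lambda_min (@lattice_affine_closed _ p q r) _ Ll).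
by move=> x /(closure_T 2); exact: S_lattice.
Qed.
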